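(* Let $\mathrm{E}$ be a law of the form $\mathrm{x}\simeq\mathrm{x}\diamond f(\mathrm{x},\mathrm{y},\mathrm{z})$, for some word $f$ in the variables $\mathrm{x},\mathrm{y},\mathrm{z}$, which implies the law $\mathrm{x}\diamond\mathrm{y}\simeq(\mathrm{x}\diamond\mathrm{y})\diamond\mathrm{y}$. Let $w\in M_X$ be irreducible and $w'\in M_X$ with $w\sim_{\mathrm{E}}w'$. (i) If $w=w_1\diamond w_2$, then $w'=(\cdots((w_1'\diamond w_2')\diamond v_1)\diamond\cdots)\diamond v_n$ for some $n\ge0$, words $w_1'\sim_{\mathrm{E}}w_1$, $w_2'\sim_{\mathrm{E}}w_2$, and words $v_1,\dots,v_n$ such that for each $0\le i<n$ there are words $x_i,y_i,z_i$ with $v_{i+1}\sim_{\mathrm{E}}f(x_i,y_i,z_i)$ and $x_i\sim_{\mathrm{E}}(\cdots((w_1'\diamond w_2')\diamond v_1)\diamond\cdots)\diamond v_i$ (in particular $v_{i+1}\to_{\mathrm{E}}x_i$). (ii) If $w\in X$ is a letter, then $w'=(\cdots(w\diamond v_1)\diamond\cdots)\diamond v_n$ for some $n\ge0$ and words $v_1,\dots,v_n$ such that for each $0\le i<n$ there are words $x_i,y_i,z_i$ with $v_{i+1}\sim_{\mathrm{E}}f(x_i,y_i,z_i)$ and $x_i\sim_{\mathrm{E}}(\cdots(w\diamond v_1)\diamond\cdots)\diamond v_i$. Conversely, every word of the form described in (i) (respectively (ii)) is $\sim_{\mathrm{E}}$-equivalent to $w$.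
   Context: $M_X$ is the set of words of the free magma on an alphabet $X$. For words $u,u'$, $u\sim_{\mathrm{E}}u'$ means the law $u\simeq u'$ is a consequence of $\mathrm{E}$ (holds in every magma satisfying $\mathrm{E}$). $f(x,y,z)$ denotes the word obtained from $f$ by substituting words $x,y,z$ for $\mathrm{x},\mathrm{y},\mathrm{z}$. Define the relation $u'\to_{\mathrm{E}}u$ (on words) to mean $u\sim_{\mathrm{E}}u''\diamond u'$ for some word $u''$; given that $\mathrm{E}$ implies $\mathrm{x}\diamond\mathrm{y}\simeq(\mathrm{x}\diamond\mathrm{y})\diamond\mathrm{y}$, this is equivalent to $u\sim_{\mathrm{E}}u\diamond u'$. A word $w$ is irreducible if it is not of the form $w_1\diamond w_2$ with $w_2\to_{\mathrm{E}}w_1$. *)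

From Stdlib Require Import List Arith.
Import ListNotations.
Set Implicit Arguments.

Inductive word (X : Type) : Type :=
| Var : X -> word X
| Op : word X -> word X -> word X.
Arguments Var {X} _.
Arguments Op {X} _ _.

Inductive var3 : Type := vx | vy | vz.

Definition val3 {A : Type} (a b c : A) (v : var3) : A :=
  match v with vx => a | vy => b | vz => c end.

Fixpoint eval {X M : Type} (op : M -> M -> M) (s : X -> M) (u : word X) : M :=
  match u with
  | Var a => s a
  | Op u1 u2 => op (eval op s u1) (eval op s u2)
  end.

Fixpoint subst {X Y : Type} (s : X -> word Y) (u : word X) : word Y :=
  match u with
  | Var a => s a
  | Op u1 u2 => Op (subst s u1) (subst s u2)
  end.

Definition f_at {X : Type} (f : word var3) (x y z : word X) : word X :=
  subst (val3 x y z) f.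

Definition satisfiesE (f : word var3) (M : Type) (op : M -> M -> M) : Prop :=
  forall a b c : M, a = op a (eval op (val3 a b c) f).

Definition equivE (f : word var3) {X : Type} (u u' : word X) : Prop :=
  forall (M : Type) (op : M -> M -> M), satisfiesE f op ->
  forall s : X -> M, eval op s u = eval op s u'.

Definition implies_xy (f : word var3) : Prop :=
  forall (M : Type) (op : M -> M -> M), satisfiesE f op ->
  forall a b : M, op a b = op (op a b) b.

Definition arrowE (f : word var3) {X : Type} (u' u : word X) : Prop :=
  exists u'' : word X, equivE f u (Op u'' u').

Definition irreducible (f : word var3) {X : Type} (w : word X) : Prop :=
  ~ (exists w1 w2 : word X, w = Op w1 w2 /\ arrowE f w2 w1).

Definition chain {X : Type} (w0 : word X) (vs : list (word X)) : word X :=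
  fold_left Op vs w0.

Definition good_chain (f : word var3) {X : Type} (w0 : word X)
    (vs : list (word X)) : Prop :=
  forall i, i < length vs ->
    exists xi yi zi : word X,
      equivE f (nth i vs w0) (f_at f xi yi zi) /\
      equivE f xi (chain w0 (firstn i vs)).

From Stdlib Require Import List Arith Lia Relations FunctionalExtensionality
  PropExtensionality ProofIrrelevance.
Import ListNotations.

(* Since E is a single equation, w ~E w' holds exactly when w' arises from w by
   finitely many applications of E, in either direction, inside a context
   (proved via the term model of E).  Call a word a chain over a base set B if
   it is b <> v1 <> ... <> vn with b in B and each v(i+1) ~ f(x_i, y_i, z_i)
   for some x_i ~ b <> v1 <> ... <> vi.  Chains over a base set are closed under
   single steps: an expansion at the top appends a link, a contraction at the
   top removes the last one, and a step inside the head or inside a link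
   preserves the conditions up to ~E.  For the bases {w1' <> w2' | w1' ~ w1,
   w2' ~ w2} and {a}, the only step that could leave the base is a top-level
   contraction of w1' <> w2', which irreducibility of w1 <> w2 excludes. *)

Lemma eval_subst {X Y M : Type} (op : M -> M -> M) (s : Y -> M)
    (sg : X -> word Y) (u : word X) :
  eval op s (subst sg u) = eval op (fun a => eval op s (sg a)) u.
Proof. induction u; simpl; congruence. Qed.

Lemma eval_ext {X M : Type} (op : M -> M -> M) (s s' : X -> M) (u : word X) :
  (forall a, s a = s' a) -> eval op s u = eval op s' u.
Proof. intros H; induction u; simpl; congruence. Qed.

Lemma eval_f_at {X M : Type} (op : M -> M -> M) (s : X -> M) f (x y z : word X) :
  eval op s (f_at f x y z)
  = eval op (val3 (eval op s x) (eval op s y) (eval op s z)) f.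
Proof. unfold f_at. rewrite eval_subst. apply eval_ext. now intros []. Qed.

Lemma subst_Var {X : Type} (u : word X) : subst Var u = u.
Proof. induction u; simpl; congruence. Qed.

Section Derivations.

Context {f : word var3} {X : Type}.
Implicit Types (u v t x y z : word X).

Lemma equivE_refl u : equivE f u u.
Proof. now intros M op _ s. Qed.

Lemma equivE_sym u v : equivE f u v -> equivE f v u.
Proof. intros H M op HE s; symmetry; now apply H. Qed.

Lemma equivE_trans u v t : equivE f u v -> equivE f v t -> equivE f u t.
Proof. intros H1 H2 M op HE s; rewrite (H1 M op HE s); now apply H2. Qed.

Lemma equivE_Op u u' v v' :
  equivE f u u' -> equivE f v v' -> equivE f (Op u v) (Op u' v').
Proof. intros H1 H2 M op HE s; simpl; now rewrite (H1 M op HE s), (H2 M op HE s). Qed.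

Lemma equivE_f_at x x' y z :
  equivE f x x' -> equivE f (f_at f x y z) (f_at f x' y z).
Proof. intros H M op HE s; now rewrite !eval_f_at, (H M op HE s). Qed.

Lemma equivE_law t y z : equivE f t (Op t (f_at f t y z)).
Proof. intros M op HE s; simpl; rewrite eval_f_at; apply HE. Qed.

Inductive step : word X -> word X -> Prop :=
| step_expand t y z : step t (Op t (f_at f t y z))
| step_contract t y z : step (Op t (f_at f t y z)) t
| step_Opl u u' v : step u u' -> step (Op u v) (Op u' v)
| step_Opr u v v' : step v v' -> step (Op u v) (Op u v').

Lemma step_sym u v : step u v -> step v u.
Proof. induction 1; constructor; auto. Qed.

Lemma equivE_step u v : step u v -> equivE f u v.
Proof.
  induction 1.
  - apply equivE_law.
  - apply equivE_sym, equivE_law.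
  - now apply equivE_Op, equivE_refl.
  - now apply equivE_Op; [apply equivE_refl |].
Qed.

Definition derivable : relation (word X) := clos_refl_sym_trans _ step.

Lemma derivable_Opl u u' v : derivable u u' -> derivable (Op u v) (Op u' v).
Proof.
  induction 1; [apply rst_step; now constructor | apply rst_refl
               | now apply rst_sym | eapply rst_trans; eauto].
Qed.

Lemma derivable_Opr u v v' : derivable v v' -> derivable (Op u v) (Op u v').
Proof.
  induction 1; [apply rst_step; now constructor | apply rst_refl
               | now apply rst_sym | eapply rst_trans; eauto].
Qed.

(* The term model: elements are the [derivable]-classes of words, kept as
   predicates so that the magma operation needs no choice of representatives. *)
Definition term_model : Type := { P : word X -> Prop | exists u, P = derivable u }.

Definition class u : term_model := exist _ (derivable u) (ex_intro _ u eq_refl).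

Lemma class_surj (P : term_model) : exists u, P = class u.
Proof.
  destruct P as [P [u ->]]; exists u; unfold class; f_equal; apply proof_irrelevance.
Qed.

Lemma class_eq u v : derivable u v -> class u = class v.
Proof.
  intros H; unfold class; apply eq_exist_uncurried; simpl.
  assert (Huv : derivable u = derivable v).
  { apply functional_extensionality; intro t; apply propositional_extensionality.
    split; intro Ht; eapply rst_trans; eauto using rst_sym. }
  exists Huv; apply proof_irrelevance.
Qed.

Lemma derivable_class_inj u v : class u = class v -> derivable u v.
Proof.
  intros H; apply (f_equal (@proj1_sig _ _)) in H; simpl in H.
  rewrite H; apply rst_refl.
Qed.

Lemma derivable_Op u u' v v' :
  derivable u u' -> derivable v v' -> derivable (Op u v) (Op u' v').
Proof.
  intros Hu Hv; eapply rst_trans; [apply derivable_Opl, Hu | apply derivable_Opr, Hv].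
Qed.

Lemma derivable_Op_classes u v :
  (fun t => exists u' v', derivable u u' /\ derivable v v' /\ derivable (Op u' v') t)
  = derivable (Op u v).
Proof.
  apply functional_extensionality; intro t; apply propositional_extensionality.
  split.
  - intros (u' & v' & Hu & Hv & Ht); eapply rst_trans; [apply derivable_Op |]; eauto.
  - intros Ht; exists u, v; repeat split; [apply rst_refl | apply rst_refl | exact Ht].
Qed.

Definition model_op (P Q : term_model) : term_model.
Proof.
  refine (exist _ (fun t => exists u v, proj1_sig P u /\ proj1_sig Q v
                                     /\ derivable (Op u v) t) _).
  destruct P as [P [u ->]], Q as [Q [v ->]]; exists (Op u v).
  apply derivable_Op_classes.
Defined.

Lemma model_op_class u v : model_op (class u) (class v) = class (Op u v).
Proof.
  apply eq_exist_uncurried; exists (derivable_Op_classes u v); apply proof_irrelevance.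
Qed.

Lemma eval_model {Y : Type} (s : Y -> term_model) (sg : Y -> word X) (u : word Y) :
  (forall a, s a = class (sg a)) -> eval model_op s u = class (subst sg u).
Proof.
  intros H; induction u; simpl; [apply H |].
  now rewrite IHu1, IHu2, model_op_class.
Qed.

Lemma term_model_satisfiesE : satisfiesE f model_op.
Proof.
  intros a b c.
  destruct (class_surj a) as [x ->], (class_surj b) as [y ->], (class_surj c) as [z ->].
  rewrite (eval_model _ (val3 x y z)) by now intros [].
  rewrite model_op_class; apply class_eq, rst_step, step_expand.
Qed.

Lemma derivable_of_equivE u v : equivE f u v -> derivable u v.
Proof.
  intros H; specialize (H _ _ term_model_satisfiesE (fun a => class (Var a))).
  rewrite !(eval_model _ Var) in H by reflexivity.
  rewrite !subst_Var in H; now apply derivable_class_inj.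
Qed.

Lemma chain_snoc (b : word X) vs v : chain b (vs ++ [v]) = Op (chain b vs) v.
Proof. unfold chain; now rewrite fold_left_app. Qed.

Definition good_link (t v : word X) : Prop :=
  exists x y z, equivE f v (f_at f x y z) /\ equivE f x t.

Lemma good_chain_snoc (b : word X) vs v :
  good_chain f b (vs ++ [v]) <-> good_chain f b vs /\ good_link (chain b vs) v.
Proof.
  unfold good_chain, good_link; rewrite length_app; simpl.
  assert (Hpre : forall i, i <= length vs -> firstn i (vs ++ [v]) = firstn i vs).
  { intros i Hi; rewrite firstn_app.
    replace (i - length vs) with 0 by lia; apply app_nil_r. }
  assert (Hlast : nth (length vs) (vs ++ [v]) b = v).
  { now rewrite app_nth2, Nat.sub_diag by lia. }
  split.
  - intros H; split.
    + intros i Hi; rewrite <- app_nth1 with (l' := [v]), <- Hpre by lia.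
      apply H; lia.
    + specialize (H (length vs) ltac:(lia)).
      now rewrite Hlast, Hpre, firstn_all in H by lia.
  - intros [H Hv] i Hi.
    destruct (Nat.lt_ge_cases i (length vs)) as [Hlt | Hge].
    + rewrite app_nth1, Hpre by lia; now apply H.
    + replace i with (length vs) by lia.
      now rewrite Hlast, Hpre, firstn_all by lia.
Qed.

Inductive chain_over (B : word X -> Prop) : word X -> Prop :=
| chain_over_base b : B b -> chain_over B b
| chain_over_link t v : chain_over B t -> good_link t v -> chain_over B (Op t v).

Lemma chain_over_good_chain (B : word X -> Prop) t :
  chain_over B t <-> exists b vs, B b /\ good_chain f b vs /\ t = chain b vs.
Proof.
  split.
  - induction 1 as [b Hb | t v _ (b & vs & Hb & Hg & ->) Hv].
    + exists b, []; repeat split; auto; intros i Hi; simpl in Hi; lia.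
    + exists b, (vs ++ [v]); rewrite chain_snoc, good_chain_snoc; auto.
  - intros (b & vs & Hb & Hg & ->); revert Hg.
    induction vs as [| v vs IH] using rev_ind; intros Hg; [now constructor |].
    apply good_chain_snoc in Hg as [Hg Hv]; rewrite chain_snoc.
    apply chain_over_link; auto.
Qed.

Definition closed_up_to_expansion (B : word X -> Prop) : Prop :=
  forall b t, B b -> step b t -> B t \/ exists y z, t = Op b (f_at f b y z).

Lemma good_link_equivE t t' v v' :
  equivE f t t' -> equivE f v v' -> good_link t v -> good_link t' v'.
Proof.
  intros Ht Hv (x & y & z & Hvx & Hxt); exists x, y, z; split.
  - eapply equivE_trans; [apply equivE_sym, Hv | exact Hvx].
  - eapply equivE_trans; [exact Hxt | exact Ht].
Qed.

Lemma good_link_expand t y z : good_link t (f_at f t y z).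
Proof. exists t, y, z; split; apply equivE_refl. Qed.

Lemma chain_over_step (B : word X -> Prop) :
  closed_up_to_expansion B -> forall t t', chain_over B t -> step t t' -> chain_over B t'.
Proof.
  intros HB t t' Ht; revert t'.
  induction Ht as [b Hb | t v Ht IH Hv]; intros t' Hs.
  - destruct (HB _ _ Hb Hs) as [Ht' | (y & z & ->)].
    + now apply chain_over_base.
    + apply chain_over_link; [now apply chain_over_base | apply good_link_expand].
  - inversion Hs; subst.
    + apply chain_over_link; [now apply chain_over_link | apply good_link_expand].
    + exact Ht.
    + apply chain_over_link; [now apply IH |].
      eapply good_link_equivE; [apply equivE_step | apply equivE_refl |]; eauto.
    + apply chain_over_link; [exact Ht |].
      eapply good_link_equivE; [apply equivE_refl | apply equivE_step |]; eauto.
Qed.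

Lemma chain_over_derivable (B : word X -> Prop) :
  closed_up_to_expansion B -> forall u v, derivable u v ->
  (chain_over B u <-> chain_over B v).
Proof.
  intros HB u v; induction 1; try tauto.
  split; eauto using chain_over_step, step_sym.
Qed.

Lemma equivE_link t v : good_link t v -> equivE f t (Op t v).
Proof.
  intros (x & y & z & Hv & Hx).
  eapply equivE_trans; [apply (equivE_law t y z) | apply equivE_Op; [apply equivE_refl |]].
  eapply equivE_trans; [apply equivE_f_at, equivE_sym, Hx | apply equivE_sym, Hv].
Qed.

Lemma equivE_iff_chain_over (B : word X -> Prop) w :
  closed_up_to_expansion B -> B w -> (forall b, B b -> equivE f w b) ->
  forall w', equivE f w w' <-> chain_over B w'.
Proof.
  intros HB Hw Hbase w'; split.
  - intros H; apply (chain_over_derivable _ HB _ _ (derivable_of_equivE _ _ H)).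
    now apply chain_over_base.
  - induction 1 as [b Hb | t v _ IH Hv]; auto.
    eapply equivE_trans; [exact IH | now apply equivE_link].
Qed.

Definition Op_base (w1 w2 : word X) (t : word X) : Prop :=
  exists w1' w2', t = Op w1' w2' /\ equivE f w1' w1 /\ equivE f w2' w2.

Lemma Op_base_closed w1 w2 :
  irreducible f (Op w1 w2) -> closed_up_to_expansion (Op_base w1 w2).
Proof.
  intros Hirr b t (w1' & w2' & -> & H1 & H2) Hs; inversion Hs; subst.
  - right; eauto.
  - exfalso; apply Hirr; exists w1, w2; split; [reflexivity |].
    exists t; eapply equivE_trans; [apply equivE_sym, H1 |].
    eapply equivE_trans; [apply (equivE_law t y z) | apply equivE_Op; auto].
    apply equivE_refl.
  - left; exists u', w2'; repeat split; auto.
    eapply equivE_trans; [apply equivE_sym, equivE_step | ]; eauto.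
  - left; exists w1', v'; repeat split; auto.
    eapply equivE_trans; [apply equivE_sym, equivE_step | ]; eauto.
Qed.

Lemma Var_closed (a : X) : closed_up_to_expansion (eq (Var a)).
Proof. intros b t <- Hs; inversion Hs; subst; right; eauto. Qed.

End Derivations.

Theorem mainTheorem11 (X : Type) (f : word var3) :
  implies_xy f ->
  forall w : word X, irreducible f w ->
  (forall w1 w2 : word X, w = Op w1 w2 ->
     forall w' : word X,
       equivE f w w' <->
       exists (w1' w2' : word X) (vs : list (word X)),
         equivE f w1' w1 /\ equivE f w2' w2 /\
         good_chain f (Op w1' w2') vs /\ w' = chain (Op w1' w2') vs) /\
  (forall a : X, w = Var a ->
     forall w' : word X,
       equivE f w w' <->
       exists vs : list (word X),
         good_chain f (Var a) vs /\ w' = chain (Var a) vs).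
Proof.
  intros _ w Hirr; split.
  - intros w1 w2 -> w'.
    rewrite (equivE_iff_chain_over _ _ (Op_base_closed _ _ Hirr)), chain_over_good_chain.
    + split.
      * intros (b & vs & (w1' & w2' & -> & H1 & H2) & Hg & ->); exists w1', w2', vs; auto.
      * intros (w1' & w2' & vs & H1 & H2 & Hg & ->); exists (Op w1' w2'), vs.
        repeat split; auto; exists w1', w2'; auto.
    + exists w1, w2; split; [reflexivity | split; apply equivE_refl].
    + intros b (w1' & w2' & -> & H1 & H2); apply equivE_Op; apply equivE_sym; assumption.
  - intros a -> w'.
    rewrite (equivE_iff_chain_over _ _ (Var_closed a)), chain_over_good_chain;
      [| reflexivity | intros b <-; apply equivE_refl].
    split.
    + intros (b & vs & <- & Hg & ->); eauto.
    + intros (vs & Hg & ->); eauto.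
Qed.
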